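(* Let $d\in\mathbb N\cup\{\infty\}$ and let ${\boldsymbol\gamma}$ be product weights, $\gamma_u=\prod_{j\in u}\gamma_j$. Then $(\Delta_v{\boldsymbol\gamma})_u=\gamma_u\prod_{j\in v}(1-\gamma_j)$ for all $u,v\in\mathcal U_d$ with $u\cap v=\emptyset$, and ${\boldsymbol\gamma}\in\mathcal M_d$ if and only if $0\le\gamma_j\le1$ for all $j\in[d]$. If moreover $d=\infty$ and ${\boldsymbol\gamma}\in\mathcal M_d$, then: (a) ${\boldsymbol\gamma}\in\mathcal N_d$ iff $\lim_{j\to\infty}\gamma_j=0$; (b) for any $C>0$, $T^\downarrow_{d,C}{\boldsymbol\gamma}=\mathbf 0$ iff $\sum_{j=1}^\infty\gamma_j=\infty$; (c) ${\boldsymbol\gamma}\in\mathcal A_d$ iff $\sum_{j=1}^\infty\gamma_j<\infty$ iff ${\boldsymbol\gamma}\in\mathcal P_d$.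
   Context: Write $[d]=\{1,\dots,d\}$ if $d\in\mathbb N$ and $[d]=\mathbb N$ if $d=\infty$; $[s]=\{1,\dots,s\}$ for $s\in\mathbb N$. Let $\mathcal U_d$ be the set of all finite subsets of $[d]$. Weights are families ${\boldsymbol\gamma}=(\gamma_u)_{u\in\mathcal U_d}$ of non-negative reals ($\mathcal W_d$); inequalities and limits of families are componentwise, $\mathbf 0$ is the zero family. Product weights: $\gamma_u=\prod_{j\in u}\gamma_j$ for a non-increasing sequence $(\gamma_j)_{j\in[d]}$ of non-negative reals, with $\gamma_\emptyset=1$. Difference operator: $(\Delta_v{\boldsymbol\gamma})_u=\sum_{w\subseteq v}(-1)^{|w|}\gamma_{u\cup w}$. $\mathcal M_d$: weights with $\Delta_v{\boldsymbol\gamma}\ge\mathbf 0$ for all $v\in\mathcal U_d$. For $d=\infty$ and $C>0$: $(T^\downarrow_{d,C}{\boldsymbol\gamma})_u=C^{-2|u|}\lim_{s\to\infty}(\Delta_{[s]\setminus u}{\boldsymbol\gamma})_u$ for ${\boldsymbol\gamma}\in\mathcal M_d$; with $\max\emptyset=0$, $\mathcal N_d=\{{\boldsymbol\gamma}\in\mathcal M_d:\gamma_u\to0\text{ as }\max u\to\infty\}$; $\mathcal P_d=\{{\boldsymbol\gamma}\in\mathcal M_d:\sum_{v}\gamma_v<\infty\}$; $\mathcal A_d=\{{\boldsymbol\gamma}\in\mathcal M_d:\lim_{r\to\infty}\lim_{s\to\infty}\Delta_{[s]\setminus[r]}{\boldsymbol\gamma}={\boldsymbol\gamma}\}$. *)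

From HB Require Import structures.
From mathcomp Require Import all_boot all_order all_algebra.
From mathcomp Require Import finmap.
From mathcomp Require Import all_classical all_reals all_analysis.
Set Implicit Arguments. Unset Strict Implicit. Unset Printing Implicit Defensive.
Import Order.TTheory GRing.Theory Num.Theory numFieldNormedType.Exports.
Local Open Scope ring_scope.
Local Open Scope fset_scope.
Local Open Scope classical_set_scope.

(* d in N ∪ {∞}: [Some n] is the finite dimension n, [None] is d = ∞. *)
Definition dimx := option nat.

Definition in_dim (d : dimx) (j : nat) : bool :=
  (1 <= j)%N && (match d with Some n => (j <= n)%N | None => true end).

Definition inU (d : dimx) (u : {fset nat}) : Prop := forall j, j \in u -> in_dim d j.

Definition segm (s : nat) : {fset nat} := seq_fset tt (iota 1 s).

Section Weights.
Variable R : realType.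

(* a family (γ_u)_{u ∈ U_d}; only values on U_d are relevant *)
Definition weight := {fset nat} -> R.

Definition Delta (v : {fset nat}) (gamma : weight) : weight :=
  fun u => \sum_(w <- fpowerset v) (-1) ^+ #|` w| * gamma (u `|` w)%fset.

Definition inW (d : dimx) (gamma : weight) : Prop :=
  forall u, inU d u -> 0 <= gamma u.

Definition inM (d : dimx) (gamma : weight) : Prop :=
  forall v, inU d v -> forall u, inU d u -> 0 <= Delta v gamma u.

Definition prodw (g : nat -> R) : weight := fun u => \prod_(j <- u) g j.

Definition product_seq (d : dimx) (g : nat -> R) : Prop :=
  (forall j, in_dim d j -> 0 <= g j) /\
  (forall i j, in_dim d i -> in_dim d j -> (i <= j)%N -> g j <= g i).

(* max u, with max ∅ = 0 *)
Definition maxf (u : {fset nat}) : nat := \max_(j <- u) j.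

Definition inN (d : dimx) (gamma : weight) : Prop :=
  inM d gamma /\
  forall e : R, 0 < e -> exists N : nat,
    forall u, inU d u -> (N <= maxf u)%N -> `|gamma u| < e.

Definition inP (d : dimx) (gamma : weight) : Prop :=
  inM d gamma /\ (\esum_(v in [set v | inU d v]) (gamma v)%:E < +oo)%E.

Definition Tdown (C : R) (gamma : weight) : weight :=
  fun u => C ^- (2 * #|` u|) *
           lim ((fun s : nat => Delta (segm s `\` u)%fset gamma u) @ \oo).

Definition inA (d : dimx) (gamma : weight) : Prop :=
  inM d gamma /\
  forall u, inU d u ->
    (fun r : nat => lim ((fun s : nat => Delta (segm s `\` segm r)%fset gamma u) @ \oo))
      @ \oo --> gamma u.

End Weights.

From HB Require Import structures.
From mathcomp Require Import all_boot all_order all_algebra.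
From mathcomp Require Import finmap.
From mathcomp Require Import all_classical all_reals all_analysis.
From mathcomp Require Import lra.
Set Implicit Arguments. Unset Strict Implicit. Unset Printing Implicit Defensive.
Import Order.TTheory GRing.Theory Num.Theory numFieldNormedType.Exports.
Local Open Scope classical_set_scope.
Local Open Scope fset_scope.
Local Open Scope ring_scope.

(* For product weights the alternating sum defining Delta_v gamma_u factorises: adding a
   point a to v multiplies it by (1 - gamma_a) if a is not in u and kills it otherwise, so
   Delta_v gamma_u = gamma_u * prod_{j in v} (1 - gamma_j) for disjoint u, v, and M_d
   amounts to 0 <= gamma_j <= 1.  For d = oo the limits in T and A reduce to the products
   prod_{j in [s] \ w} (1 - gamma_j), which are squeezed between 1 - sum gamma_j and
   1 / (1 + sum gamma_j) (sums over the same indices).  Hence their limits vanish when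
   sum_j gamma_j = oo, while otherwise the limit is at least 1 - sum_{j > r} gamma_j as
   soon as w contains every j <= r with gamma_j <> 0.  Finally
   sum_{v <= [N]} gamma_v = prod_{j <= N} (1 + gamma_j) lies between sum_{j <= N} gamma_j and exp (sum_j gamma_j), which gives P_d. *)

Section Fpowerset.
Variable K : choiceType.
Implicit Types (a : K) (A : {fset K}).

Lemma fpowersetU1_perm a A : a \notin A ->
  perm_eq (fpowerset (a |` A)) (fpowerset A ++ [seq a |` w | w <- fpowerset A]).
Proof.
move=> aA; have aNw w : w `<=` A -> a \notin w.
  by move=> /fsubsetP wA; apply: contra aA; exact: wA.
apply: uniq_perm; first exact: fset_uniq.
  rewrite cat_uniq fset_uniq /=; apply/andP; split.
    apply/hasPn => _ /mapP [w _ ->]; rewrite fpowersetE.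
    by apply: contra aA => /fsubsetP; apply; rewrite fset1U1.
  rewrite map_inj_in_uniq ?fset_uniq // => w1 w2.
  rewrite !fpowersetE => /aNw aw1 /aNw aw2 e.
  by rewrite -(fsetU1K aw1) -(fsetU1K aw2) e.
move=> w; rewrite mem_cat fpowersetE; apply/idP/orP.
  move=> wA; case: (boolP (a \in w)) => aw; [right | left].
    apply/mapP; exists (w `\ a); last by rewrite fsetD1K.
    rewrite fpowersetE; apply/fsubsetP => x; rewrite in_fsetD1 => /andP [xa xw].
    by move/fsubsetP: wA => /(_ x xw); rewrite in_fset1U (negbTE xa).
  rewrite fpowersetE; apply/fsubsetP => x xw.
  move/fsubsetP: wA => /(_ x xw); rewrite in_fset1U => /orP [/eqP xa|//].
  by move: aw; rewrite -xa xw.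
case=> [|/mapP [w' + ->]]; rewrite !fpowersetE.
  by move=> wA; exact: fsubset_trans wA (fsubsetU1 _ _).
exact: fsetUS.
Qed.

Lemma big_fpowersetU1 (V : Type) (idx : V) (op : Monoid.com_law idx)
    a A (F : {fset K} -> V) : a \notin A ->
  \big[op/idx]_(w <- fpowerset (a |` A)) F w =
  op (\big[op/idx]_(w <- fpowerset A) F w) (\big[op/idx]_(w <- fpowerset A) F (a |` w)).
Proof. by move=> aA; rewrite (perm_big _ (fpowersetU1_perm aA)) big_cat big_map. Qed.

End Fpowerset.

Section Delta.
Variable R : realType.
Implicit Types (g : nat -> R) (gamma : weight R) (u v w : {fset nat}).

Lemma Delta0 gamma u : Delta fset0 gamma u = gamma u.
Proof.
by rewrite /Delta fpowerset0 big_seq_fset1 cardfs0 expr0 mul1r fsetU0.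
Qed.

Lemma Delta_fset1U gamma (a : nat) v u : a \notin v ->
  Delta (a |` v) gamma u = Delta v gamma u - Delta v gamma (a |` u).
Proof.
move=> av; rewrite /Delta big_fpowersetU1 //; congr (_ + _).
rewrite -sumrN big_seq [in RHS]big_seq; apply: eq_bigr => w.
rewrite fpowersetE => /fsubsetP wv.
have aw : a \notin w by apply: contra av; exact: wv.
by rewrite cardfsU1 aw exprS mulN1r mulNr fsetUA (fsetUC u [fset a]) -fsetUA.
Qed.

Lemma Delta_prodw g v u :
  Delta v (prodw g) u = prodw g u * \prod_(j <- v) (if j \in u then 0 else 1 - g j).
Proof.
elim/fset1U_rect: v u => [|a v av IHv] u; first by rewrite Delta0 big_seq_fset0 mulr1.
rewrite Delta_fset1U // !IHv big_fsetU1 //=.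
have [au | au] := boolP (a \in u).
  by rewrite (fsetUidPr _ _ _) ?fsub1set // subrr mul0r mulr0.
have -> : \prod_(j <- v) (if j \in a |` u then 0 else 1 - g j) =
          \prod_(j <- v) (if j \in u then 0 else 1 - g j).
  rewrite big_seq [RHS]big_seq; apply: eq_bigr => j jv.
  by rewrite in_fset1U; case: eqP => // ja; move: av; rewrite -ja jv.
rewrite /prodw big_fsetU1 //=; lra.
Qed.

Lemma Delta_prodw_disjoint g u v : [disjoint u & v] ->
  Delta v (prodw g) u = prodw g u * \prod_(j <- v) (1 - g j).
Proof.
move=> /fdisjointP uv; rewrite Delta_prodw; congr (_ * _).
rewrite big_seq [RHS]big_seq; apply: eq_bigr => j jv.
by case: ifP => // ju; move: (uv j ju); rewrite jv.
Qed.

Lemma inM_prodw d g :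
  inM d (prodw g) <-> (forall j, in_dim d j -> 0 <= g j <= 1).
Proof.
have dj j : in_dim d j -> inU d [fset j] by move=> jd i /fset1P ->.
have d0 : inU d fset0 by move=> i; rewrite in_fset0.
split=> [gM j jd | g01 v vd u ud].
  have := gM fset0 d0 [fset j] (dj j jd).
  have := gM [fset j] (dj j jd) fset0 d0.
  rewrite Delta0 Delta_prodw /prodw big_seq_fset0 !big_seq_fset1.
  by rewrite mul1r subr_ge0 => -> ->.
rewrite Delta_prodw mulr_ge0 //.
  by rewrite /prodw big_seq; apply: prodr_ge0 => j /ud /g01 /andP [].
rewrite big_seq; apply: prodr_ge0 => j jv; case: ifP => // _.
by rewrite subr_ge0; have /andP [] := g01 j (vd j jv).
Qed.

End Delta.

Lemma ler_sum_fsubset (R : numDomainType) (K : choiceType) (A B : {fset K}) (F : K -> R) :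
  A `<=` B -> {in B, forall x, 0 <= F x} -> \sum_(x <- A) F x <= \sum_(x <- B) F x.
Proof.
move=> AB F0; rewrite [leRHS](big_fsetID _ (mem A)) /=.
have -> : [fset x in B | x \in A] = A.
  by apply/fsetP => x; rewrite !inE /= andb_idl //; apply: (fsubsetP AB).
by rewrite lerDl big_seq sumr_ge0 // => x; rewrite !inE /= => /andP [/F0].
Qed.

Lemma sum_fpowerset_prodw (R : realType) (g : nat -> R) (A : {fset nat}) :
  \sum_(w <- fpowerset A) prodw g w = \prod_(j <- A) (1 + g j).
Proof.
elim/fset1U_rect: A => [|a A aA IHA].
  by rewrite fpowerset0 big_seq_fset1 big_seq_fset0 /prodw big_seq_fset0.
rewrite big_fpowersetU1 // big_fsetU1 //= -IHA mulrDl mul1r big_distrr; congr (_ + _).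
rewrite big_seq [RHS]big_seq; apply: eq_bigr => w; rewrite fpowersetE => /fsubsetP wA.
by rewrite /prodw big_fsetU1 //=; apply: contra aA; exact: wA.
Qed.

Section ProdOneMinus.
Variables (R : realDomainType) (I : eqType).
Implicit Types (r : seq I) (F : I -> R).

Lemma prodr1B_ge r F : {in r, forall i, 0 <= F i <= 1} ->
  1 - \sum_(i <- r) F i <= \prod_(i <- r) (1 - F i).
Proof.
elim: r => [|a r IHr] F01; first by rewrite !big_nil subr0.
have /andP [Fa0 Fa1] := F01 a (mem_head _ _).
have {}F01 : {in r, forall i, 0 <= F i <= 1}.
  by move=> i ir; apply: F01; rewrite inE ir orbT.
have S0 : 0 <= \sum_(i <- r) F i by rewrite big_seq sumr_ge0 // => i /F01 /andP [].
have := IHr F01; rewrite !big_cons; nra.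
Qed.

Lemma prodr1B_mul_le1 r F : {in r, forall i, 0 <= F i <= 1} ->
  \prod_(i <- r) (1 - F i) * (1 + \sum_(i <- r) F i) <= 1.
Proof.
elim: r => [|a r IHr] F01; first by rewrite !big_nil addr0 mulr1.
have /andP [Fa0 Fa1] := F01 a (mem_head _ _).
have {}F01 : {in r, forall i, 0 <= F i <= 1}.
  by move=> i ir; apply: F01; rewrite inE ir orbT.
have P0 : 0 <= \prod_(i <- r) (1 - F i).
  by rewrite big_seq prodr_ge0 // => i /F01 /andP [_]; rewrite subr_ge0.
have P1 : \prod_(i <- r) (1 - F i) <= 1.
  rewrite big_seq prodr_ile1 // => i /F01 /andP [Fi0 Fi1].
  by rewrite subr_ge0 Fi1 gerBl.
have := IHr F01; rewrite !big_cons; nra.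
Qed.

End ProdOneMinus.

Lemma prodr1D_le_expR (R : realType) (I : eqType) (r : seq I) (F : I -> R) :
  {in r, forall i, 0 <= F i} -> \prod_(i <- r) (1 + F i) <= expR (\sum_(i <- r) F i).
Proof.
elim: r => [|a r IHr] F0; first by rewrite !big_nil expR0.
have Fa := F0 a (mem_head _ _).
have {}F0 : {in r, forall i, 0 <= F i} by move=> i ir; apply: F0; rewrite inE ir orbT.
rewrite !big_cons expRD ler_pM ?addr_ge0 ?expR_ge1Dx ?IHr //.
by rewrite big_seq prodr_ge0 // => i /F0 Fi; rewrite addr_ge0.
Qed.

Lemma in_dim_inf j : in_dim None j = (0 < j)%N.
Proof. by rewrite /in_dim andbT. Qed.

Lemma in_segm s j : (j \in segm s) = (0 < j <= s)%N.
Proof. by rewrite seq_fsetE mem_iota add1n ltnS. Qed.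

Lemma big_segmD (V : Type) (idx : V) (op : Monoid.com_law idx) s w (F : nat -> V) :
  \big[op/idx]_(j <- segm s `\` w) F j = \big[op/idx]_(1 <= j < s.+1 | j \notin w) F j.
Proof.
rewrite -[RHS]big_filter; apply: perm_big; apply: uniq_perm.
- exact: fset_uniq.
- by rewrite filter_uniq // iota_uniq.
by move=> j; rewrite in_fsetD in_segm mem_filter mem_index_iota ltnS andbC.
Qed.

Lemma leq_maxf (u : {fset nat}) j : j \in u -> (j <= maxf u)%N.
Proof. by move=> ju; apply: (@leq_bigmax_seq _ _ _ (fun j => j)). Qed.

Lemma maxf_geP (u : {fset nat}) N : (0 < N)%N -> (N <= maxf u)%N ->
  exists2 j, j \in u & (N <= j)%N.
Proof.
move=> N0 Nu; apply/hasP; apply: contraLR Nu => /hasPn ltN.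
rewrite -ltnNge -(prednK N0) ltnS; apply/bigmax_leqP_seq => j ju _.
by rewrite -ltnS prednK // ltnNge ltN.
Qed.

Section TailProducts.
Variables (R : realType) (g : nat -> R).
Implicit Types (u w : {fset nat}).

Definition prod1B w s : R := \prod_(1 <= j < s.+1 | j \notin w) (1 - g j).

Lemma Delta_segmD w u s : u `<=` w ->
  Delta (segm s `\` w) (prodw g) u = prodw g u * prod1B w s.
Proof.
move=> uw; rewrite Delta_prodw_disjoint ?big_segmD //.
by apply/fdisjointP => j /(fsubsetP uw) jw; rewrite in_fsetD jw.
Qed.

Hypothesis g01 : forall j, (0 < j)%N -> 0 <= g j <= 1.

Let g01_iota n (P : pred nat) :
  {in [seq j <- index_iota 1 n | P j], forall j, 0 <= g j <= 1}.
Proof. by move=> j; rewrite mem_filter mem_index_iota => /andP [_ /andP [/g01]]. Qed.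

Lemma prod1B_ge0 w s : 0 <= prod1B w s.
Proof.
rewrite /prod1B big_nat_cond prodr_ge0 // => j /andP [/andP [/g01 /andP [_]]].
by rewrite subr_ge0.
Qed.

Lemma prod1B_le1 w s : prod1B w s <= 1.
Proof.
rewrite /prod1B big_nat_cond prodr_ile1 // => j /andP [/andP [/g01 /andP [g0 g1] _] _].
apply/andP; split; lra.
Qed.

Lemma nonincreasing_prod1B w : nonincreasing_seq (prod1B w).
Proof.
apply/nonincreasing_seqP => s; rewrite /prod1B big_mkcond big_nat_recr //=.
rewrite -big_mkcond /= -/(prod1B w s); case: ifP => _; last by rewrite mulr1.
have /andP [g0 g1] := g01 (ltn0Sn s); have := prod1B_ge0 w s; nra.
Qed.

Lemma is_cvg_prod1B w : cvgn (prod1B w).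
Proof.
apply: nonincreasing_is_cvgn; first exact: nonincreasing_prod1B.
by exists 0 => _ [s _ <-]; exact: prod1B_ge0.
Qed.

Lemma prod1B_ge_tail w r s : (forall j, (0 < j <= r)%N -> j \notin w -> g j = 0) ->
  1 - \sum_(r.+1 <= j < s.+1) g j <= prod1B w s.
Proof.
move=> gw; have := prodr1B_ge (@g01_iota s.+1 (fun j => j \notin w)).
rewrite !big_filter -/(prod1B w s); apply: le_trans; rewrite lerB //.
rewrite [leRHS](@big_nat_widenl _ _ _ _ 1) // [leLHS]big_mkcond [leRHS]big_mkcond /=.
rewrite big_nat_cond [leRHS]big_nat_cond; apply: ler_sum => j /andP [/andP [j0 _] _].
case: ifP => jw; case: ltnP => rj //.
- by rewrite gw // j0.
- by have /andP [] := g01 j0.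
Qed.

Lemma prod1B_mul_le1_tail w r s : (maxf w <= r)%N ->
  prod1B w s * (1 + \sum_(r.+1 <= j < s.+1) g j) <= 1.
Proof.
move=> wr; have := prodr1B_mul_le1 (@g01_iota s.+1 (fun j => j \notin w)).
rewrite !big_filter -/(prod1B w s); apply: le_trans.
rewrite ler_wpM2l ?prod1B_ge0 // lerD2l.
rewrite [leLHS](@big_nat_widenl _ _ _ _ 1) // [leLHS]big_mkcond [leRHS]big_mkcond /=.
rewrite big_nat_cond [leRHS]big_nat_cond; apply: ler_sum => j /andP [/andP [j0 _] _].
case: ltnP => rj; last by case: ifP => // _; have /andP [] := g01 j0.
suff -> : j \notin w by [].
by apply: contraTN rj => /leq_maxf jw; rewrite -leqNgt (leq_trans jw).
Qed.

End TailProducts.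

Section NonnegSeries.
Variables (R : realType) (g : nat -> R).
Hypothesis g0 : forall j, (0 < j)%N -> 0 <= g j.
Local Notation S := (\sum_(1 <= j <oo) (g j)%:E)%E.

Let nondecreasing_psum m : (0 < m)%N -> nondecreasing_seq (fun n => \sum_(m <= j < n) g j).
Proof. by move=> m0; apply: nondecreasing_series => j mj _; apply: g0 (leq_trans m0 mj). Qed.

Let psum_split m n : (0 < m <= n)%N ->
  \sum_(1 <= j < n) g j = \sum_(1 <= j < m) g j + \sum_(m <= j < n) g j.
Proof. by case/andP=> m0 mn; rewrite -big_cat_nat. Qed.

Lemma nneseries1_sup :
  (S = ereal_sup (range (fun n => (\sum_(1 <= j < n) g j)%:E)))%E.
Proof.
under eq_fun do rewrite sumEFin.
apply/cvg_lim => //; apply: ereal_nondecreasing_cvgn => m n mn.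
by rewrite lee_fin nondecreasing_psum.
Qed.

Lemma nneseries1_tail_unbounded : (S = +oo)%E ->
  forall r M, exists n, M < \sum_(r.+1 <= j < n) g j.
Proof.
rewrite nneseries1_sup => Soo r M.
have : ((M + \sum_(1 <= j < r.+1) g j)%:E <
        ereal_sup (range (fun n => (\sum_(1 <= j < n) g j)%:E)))%E by rewrite Soo ltey.
case/ereal_sup_gt => _ [n _ <-]; rewrite lte_fin => ltn.
exists (maxn n r.+1); rewrite -(ltrD2l (\sum_(1 <= j < r.+1) g j)) -psum_split ?leq_maxr //.
by rewrite addrC (lt_le_trans ltn) // nondecreasing_psum // leq_maxl.
Qed.

Lemma nneseries1_tail_small : (S < +oo)%E ->
  forall e, 0 < e ->
  exists r, forall r', (r <= r')%N -> forall n, \sum_(r'.+1 <= j < n) g j <= e.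
Proof.
move=> Sfin e e0.
have S0 : (0 <= S)%E by apply: nneseries_ge0 => j j1 _; rewrite lee_fin g0.
have Sr : S \is a fin_num by rewrite ge0_fin_numE.
have ub n : \sum_(1 <= j < n) g j <= fine S.
  rewrite -lee_fin fineK // nneseries1_sup; apply: ereal_sup_ubound; by exists n.
have : ((fine S - e)%:E <
        ereal_sup (range (fun n => (\sum_(1 <= j < n) g j)%:E)))%E.
  by rewrite -nneseries1_sup -[ltRHS]fineK // lte_fin ltrBlDr ltrDl.
case/ereal_sup_gt => _ [r _ <-]; rewrite lte_fin => ltr.
exists r => r' rr' n; have [nr' | r'n] := leqP n r'.+1; first by rewrite big_geq // ltW.
have := ub n; rewrite (@psum_split r'.+1) ?(ltnW r'n) //.
have : \sum_(1 <= j < r) g j <= \sum_(1 <= j < r'.+1) g j.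
  by rewrite nondecreasing_psum // (leq_trans rr').
lra.
Qed.

End NonnegSeries.

Section InfiniteDimension.
Variables (R : realType) (g : nat -> R).
Hypothesis g01 : forall j, (0 < j)%N -> 0 <= g j <= 1.
Local Notation S := (\sum_(1 <= j <oo) (g j)%:E)%E.
Implicit Types (u w : {fset nat}).

Let g0 j : (0 < j)%N -> 0 <= g j.
Proof. by move/g01/andP => []. Qed.

Lemma prodw_ge0 u : inU None u -> 0 <= prodw g u.
Proof.
by move=> uU; rewrite /prodw big_seq prodr_ge0 // => j /uU; rewrite in_dim_inf => /g0.
Qed.

Lemma prodw_le_mem u j : inU None u -> j \in u -> prodw g u <= g j.
Proof.
move=> uU ju; rewrite /prodw (big_fsetD1 _ ju) /= ler_piMr ?g0 -?in_dim_inf ?uU //.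
rewrite big_seq prodr_ile1 // => i /fsetD1P [_ /uU]; rewrite in_dim_inf.
exact: g01.
Qed.

Lemma lim_prod1B_le1 w : lim (prod1B g w @ \oo) <= 1.
Proof. by apply: limr_le; [exact: is_cvg_prod1B | apply: nearW => s; exact: prod1B_le1]. Qed.

Lemma lim_prod1B_ge w r e : (forall j, (0 < j <= r)%N -> j \notin w -> g j = 0) ->
  (forall n, \sum_(r.+1 <= j < n) g j <= e) -> 1 - e <= lim (prod1B g w @ \oo).
Proof.
move=> gw tail; apply: limr_ge; first exact: is_cvg_prod1B.
apply: nearW => s; apply: le_trans (prod1B_ge_tail g01 s gw).
by rewrite lerB.
Qed.

Lemma cvg_prod1B_0 w : S = +oo%E -> prod1B g w @ \oo --> 0.
Proof.
move=> Soo; apply/cvgrPdist_le => e e0.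
have [n ltn] := nneseries1_tail_unbounded g0 Soo (maxf w) e^-1.
near=> s; rewrite sub0r normrN ger0_norm ?prod1B_ge0 //.
have := prod1B_mul_le1_tail g01 s (leqnn (maxf w)).
have : \sum_((maxf w).+1 <= j < n) g j <= \sum_((maxf w).+1 <= j < s.+1) g j.
  apply: nondecreasing_series => [j wj _|]; first exact: g0 (leq_trans (ltn0Sn _) wj).
  by near: s; exists n => // s' /= /leqW.
have := prod1B_ge0 g01 w s; have ee : e * e^-1 = 1 by rewrite mulfV ?gt_eqF.
have : 0 < e^-1 by rewrite invr_gt0.
nra.
Unshelve. all: by end_near. Qed.

Lemma cvg_Delta_segmD w u : u `<=` w ->
  (fun s => Delta (segm s `\` w) (prodw g) u) @ \oo --> prodw g u * lim (prod1B g w @ \oo).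
Proof.
move=> uw; under eq_fun do rewrite Delta_segmD //.
by apply: cvgMr; exact: is_cvg_prod1B.
Qed.

Lemma inM_prodw_inf : inM None (prodw g).
Proof. by apply/inM_prodw => j; rewrite in_dim_inf => /g01. Qed.

Lemma inN_prodw : inN None (prodw g) <-> g @ \oo --> 0.
Proof.
split=> [[_ small] | g_to0].
  apply/cvgrPdist_lt => e e0; have [N small_e] := small e e0.
  near=> j; have j0 : (0 < j)%N by near: j; exists 1%N.
  have jU : inU None [fset j] by move=> i /fset1P ->; rewrite in_dim_inf.
  have := small_e _ jU; rewrite /maxf /prodw !big_seq_fset1 sub0r normrN; apply.
  by near: j; exists N.
split=> [|e e0]; first exact: inM_prodw_inf.
move/cvgrPdist_lt: g_to0 => /(_ e e0) [N _ small_e].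
exists (maxn N 1) => u uU Nu; have [j ju Nj] := maxf_geP (leq_maxr N 1) Nu.
rewrite ger0_norm ?prodw_ge0 //; apply: le_lt_trans (prodw_le_mem uU ju) _.
have := small_e j (leq_trans (leq_maxl _ _) Nj).
by rewrite /= sub0r normrN; apply: le_lt_trans; exact: ler_norm.
Unshelve. all: by end_near. Qed.

Lemma Tdown_prodw C u :
  Tdown C (prodw g) u = C ^- (2 * #|`u|) * (prodw g u * lim (prod1B g u @ \oo)).
Proof. by rewrite /Tdown (cvg_lim _ (cvg_Delta_segmD (fsubset_refl u))). Qed.

Lemma Tdown_prodw_eq0 C : 0 < C ->
  (forall u, inU None u -> Tdown C (prodw g) u = 0) <-> S = +oo%E.
Proof.
move=> C0; split=> [T0 | Soo u _]; last first.
  by rewrite Tdown_prodw (cvg_lim _ (cvg_prod1B_0 u Soo)) ?mulr0.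
have [//|] := eqVneq S +oo%E; rewrite -ltey => Sfin; exfalso.
have half0 : 0 < 2^-1 :> R by rewrite invr_gt0.
have [r tail] := nneseries1_tail_small g0 Sfin half0.
(* The tail product of this u only involves indices beyond r, whose weights sum to at
   most 1/2; its other factors gamma_j are nonzero. *)
pose u := [fset j in segm r | g j != 0].
have uU : inU None u.
  by move=> j; rewrite !inE in_segm in_dim_inf => /andP [/andP [] ].
apply/eqP: (T0 u uU); rewrite Tdown_prodw !mulf_neq0 //.
- by rewrite gt_eqF // invr_gt0 exprn_gt0.
- rewrite gt_eqF // /prodw big_seq prodr_gt0 // => j.
  rewrite !inE in_segm => /andP [/andP [j0 _] gj]; rewrite lt0r gj g0 //.
- rewrite gt_eqF // (lt_le_trans _ (lim_prod1B_ge _ (tail r (leqnn r)))) //.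
    by rewrite subr_gt0 invf_lt1 // ltr1n.
  move=> j /andP [j0 jr]; apply: contraNeq => gj.
  by rewrite !inE in_segm j0 jr gj.
Qed.

Lemma cvg_lim_prod1B_segm : (S < +oo)%E ->
  (fun r => lim (prod1B g (segm r) @ \oo)) @ \oo --> (1 : R).
Proof.
move=> Sfin; apply/cvgrPdist_le => e e0.
have [r0 tail] := nneseries1_tail_small g0 Sfin e0.
near=> r; have r0r : (r0 <= r)%N by near: r; exists r0.
have segm_out j : (0 < j <= r)%N -> j \notin segm r -> g j = 0 by rewrite in_segm => ->.
have := lim_prod1B_ge segm_out (tail r r0r); have := lim_prod1B_le1 (segm r).
move=> le1 ge1; rewrite ger0_norm ?subr_ge0 //; lra.
Unshelve. all: by end_near. Qed.

Lemma inA_prodw : inA None (prodw g) <-> (S < +oo)%E.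
Proof.
split=> [[_ A] | Sfin].
  rewrite ltey; apply/negP => /eqP Soo.
  have : (fun r => lim ((fun s => Delta (segm s `\` segm r) (prodw g) fset0) @ \oo)) = cst 0.
    apply/funext => r; rewrite (cvg_lim _ (cvg_Delta_segmD (fsub0set _))) //.
    by rewrite (cvg_lim _ (cvg_prod1B_0 _ Soo)) ?mulr0.
  have U0 : inU None fset0 by move=> j; rewrite in_fset0.
  move=> A0; have := A fset0 U0; rewrite A0 /prodw big_seq_fset0.
  by move/(cvg_lim (@Rhausdorff R)); rewrite lim_cst // => /esym/eqP; rewrite oner_eq0.
split=> [|u uU]; first exact: inM_prodw_inf.
have : (fun r => prodw g u * lim (prod1B g (segm r) @ \oo)) @ \oo --> prodw g u.
  by rewrite -[X in _ --> X]mulr1; apply: cvgMr; exact: cvg_lim_prod1B_segm.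
apply: cvg_trans; apply: near_eq_cvg; near=> r.
rewrite (cvg_lim _ (cvg_Delta_segmD _)) //; apply/fsubsetP => j ju.
have := uU j ju; rewrite in_dim_inf in_segm => -> /=.
apply: leq_trans (leq_maxf ju) _; near: r; exists (maxf u).
Unshelve. all: by end_near. Qed.

Lemma inP_prodw : inP None (prodw g) <-> (S < +oo)%E.
Proof.
have S0 : (0 <= S)%E by apply: nneseries_ge0 => j j0 _; rewrite lee_fin g0.
split=> [[_ Pfin] | Sfin].
  apply: le_lt_trans Pfin; rewrite (nneseries1_sup g0); apply: ge_ereal_sup => _ [n _ <-].
  apply: esum_ge; exists [set` [fset [fset j] | j in index_iota 1 n]].
    split=> [|_ /imfsetP [j /= jn ->] i /fset1P ->]; first exact: finite_fset.
    by rewrite in_dim_inf; move: jn; rewrite mem_index_iota => /andP [].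
  rewrite fsbig_finite ?finite_fset // set_fsetK big_imfset /=; last first.
    by move=> ? ? _ _ /fset1_inj.
  rewrite undup_id ?iota_uniq // sumEFin lee_fin [leRHS](eq_bigr g) // => j _.
  by rewrite /prodw big_seq_fset1.
split=> [|]; first exact: inM_prodw_inf.
have Sr : S \is a fin_num by rewrite ge0_fin_numE.
apply: (@le_lt_trans _ _ (expR (fine S))%:E); last exact: ltey.
apply: ge_ereal_sup => _ [X [Xfin XU] <-].
rewrite fsbig_finite // sumEFin lee_fin.
pose N := \max_(v <- fset_set X) maxf v.
have XN : fset_set X `<=` fpowerset (segm N).
  apply/fsubsetP => v vX; rewrite fpowersetE; apply/fsubsetP => j jv.
  have Xv : X v by move: vX; rewrite in_fset_set // inE.
  rewrite in_segm; have := XU v Xv j jv; rewrite in_dim_inf => -> /=.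
  exact: leq_trans (leq_maxf jv) (@leq_bigmax_seq _ _ _ maxf v vX isT).
apply: le_trans (ler_sum_fsubset XN _) _.
  move=> v; rewrite fpowersetE => /fsubsetP vN.
  by rewrite /prodw big_seq prodr_ge0 // => j /vN; rewrite in_segm => /andP [/g0].
rewrite sum_fpowerset_prodw; apply: le_trans (prodr1D_le_expR _) _.
  by move=> j; rewrite in_segm => /andP [/g0].
rewrite ler_expR -lee_fin fineK // (nneseries1_sup g0); apply: ereal_sup_ubound.
by exists N.+1 => //; rewrite -[segm N]fsetD0 big_segmD.
Qed.

End InfiniteDimension.

Unset Implicit Arguments.

Theorem mainTheorem6 (R : realType) (d : dimx) (g : nat -> R) :
  product_seq d g ->
  (forall u v : {fset nat}, inU d u -> inU d v -> [disjoint u & v]%fset ->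
     Delta v (prodw g) u = prodw g u * \prod_(j <- v) (1 - g j)) /\
  (inM d (prodw g) <-> (forall j, in_dim d j -> 0 <= g j <= 1)) /\
  (d = None -> inM d (prodw g) ->
     (inN d (prodw g) <-> g @ \oo --> 0) /\
     (forall C : R, 0 < C ->
        ((forall u, inU d u -> Tdown C (prodw g) u = 0) <->
         (\sum_(1 <= j <oo) (g j)%:E = +oo)%E)) /\
     ((inA d (prodw g) <-> (\sum_(1 <= j <oo) (g j)%:E < +oo)%E) /\
      ((\sum_(1 <= j <oo) (g j)%:E < +oo)%E <-> inP d (prodw g)))).
Proof.
move=> _; split=> [u v _ _ |]; first exact: Delta_prodw_disjoint.
split=> [|dinf /inM_prodw g01]; first exact: inM_prodw.
subst d; have {}g01 j : (0 < j)%N -> 0 <= g j <= 1 by rewrite -in_dim_inf; exact: g01.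
split; first exact: inN_prodw.
split; first by move=> C; exact: Tdown_prodw_eq0.
by split; [exact: inA_prodw | apply: iff_sym; exact: inP_prodw].
Qed.
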